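(* Let $\Sigma$ be a non-empty finite or countably infinite alphabet, let $\mu_p$ be the probability map induced by a Bernoulli distribution $p$ on $\Sigma$, and let $\alpha\in\Sigma^\omega$ be $\mu_p$-distributed. The following are equivalent: (i) for every strongly connected DFA $A$ over $\Sigma$, if $A[\alpha]$ is infinite then $A[\alpha]$ is $\mu_p$-distributed; (ii) for every strongly connected DFA $A$ over $\Sigma$ and every $a\in\Sigma$, if $A[\alpha]$ is infinite then the limiting frequency $\lim_{N\to\infty}\#_a(A[\alpha]|_{\le N})/N$ exists and equals $p(a)$.
   Context: $\mu_p(a_1\cdots a_n)=\prod_i p(a_i)$ for $p:\Sigma\to[0,1]$ with $\sum_ap(a)=1$. $\#_w(v)$ counts occurrences of $w$ as a contiguous block in $v$; $\beta|_{\le N}$ is the length-$N$ prefix of $\beta$; $\beta\in\Sigma^\omega$ is $\mu_p$-distributed if $\lim_N\#_w(\beta|_{\le N})/N=\mu_p(w)$ for all $w\in\Sigma^+$. A DFA over $\Sigma$ has finitely many states, total transition function $\delta$, start state $q_s$ and accepting set $F$; $A[\alpha]$ is the subsequence of those $\alpha_i$ with $\delta^*(q_s,\alpha_1\cdots\alpha_{i-1})\in F$. $A$ is strongly connected if its underlying directed graph (edges $q\to\delta(q,a)$) is strongly connected. *)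

From HB Require Import structures.
From mathcomp Require Import all_boot all_order all_algebra.
From mathcomp Require Import all_classical all_reals all_analysis.
Set Implicit Arguments. Unset Strict Implicit. Unset Printing Implicit Defensive.
Import Order.TTheory GRing.Theory Num.Theory numFieldNormedType.Exports.
Local Open Scope classical_set_scope.
Local Open Scope ring_scope.

Record dfa (Sigma : Type) := Dfa {
  state : finType;
  delta : state -> Sigma -> state;
  start : state;
  accept : {set state}
}.

Definition delta_star (Sigma : Type) (A : dfa Sigma) (q : state A) (w : seq Sigma)
  : state A := foldl (@delta Sigma A) q w.

Definition strongly_connected (Sigma : Type) (A : dfa Sigma) : Prop :=
  forall q q' : state A, exists w : seq Sigma, delta_star q w = q'.

Definition wprefix (Sigma : Type) (beta : nat -> Sigma) (N : nat) : seq Sigma :=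
  [seq beta i | i <- iota 0 N].

Definition count_occ (Sigma : eqType) (w v : seq Sigma) : nat :=
  count (fun i => take (size w) (drop i v) == w) (iota 0 (size v)).

Definition mu (R : realType) (Sigma : Type) (p : Sigma -> R) (w : seq Sigma) : R :=
  \prod_(a <- w) p a.

Definition bernoulli_dist (R : realType) (Sigma : countType) (p : Sigma -> R) : Prop :=
  (forall a, 0 <= p a <= 1) /\ (\esum_(a in [set: Sigma]) (p a)%:E = 1%E).

Definition mu_distributed (R : realType) (Sigma : eqType) (p : Sigma -> R)
  (beta : nat -> Sigma) : Prop :=
  forall w : seq Sigma, w != [::] ->
    (fun N : nat => (count_occ w (wprefix beta N))%:R / N%:R : R) @ \oo --> (mu p w : R).

(* position i (0-indexed) is selected iff the state after reading
   alpha_0 ... alpha_{i-1} is accepting *)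
Definition selected (Sigma : Type) (A : dfa Sigma) (alpha : nat -> Sigma) (i : nat) : bool :=
  delta_star (start A) (wprefix alpha i) \in accept A.

Definition sel_prefix (Sigma : Type) (A : dfa Sigma) (alpha : nat -> Sigma) (k : nat)
  : seq Sigma := [seq alpha i | i <- iota 0 k & selected A alpha i].

Definition sel_infinite (Sigma : Type) (A : dfa Sigma) (alpha : nat -> Sigma) : Prop :=
  forall n, exists k, (n < size (sel_prefix A alpha k))%N.

(* A[alpha] as an infinite word: its n-th letter is the n-th letter of any
   sufficiently long sel_prefix (these are prefixes of each other).  Only
   meaningful when A[alpha] is infinite; default alpha 0 otherwise. *)
Definition dfa_select (Sigma : Type) (A : dfa Sigma) (alpha : nat -> Sigma) (n : nat)
  : Sigma :=
  match pselect (exists k, (n < size (sel_prefix A alpha k))%N) with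
  | left h => nth (alpha 0%N) (sel_prefix A alpha (ex_minn h)) n
  | right _ => alpha 0%N
  end.

(* (i) => (ii) is the case of one-letter words.  For (ii) => (i) fix A and
   beta := A[alpha], and prove by induction on |w| that w has density
   mu_p(w) in beta.  For w = u c, run A together with a memory recording which
   prefixes of u end the word A has selected so far; the product DFA D selects
   position i iff A does and the letters selected before end with u.  Thus
   D[alpha] is the subsequence of beta of the letters that follow an
   occurrence of u.  Once |u| letters are selected the memory depends only on
   the last |u| of them, so D (restricted to such settled configurations) is
   strongly connected and (ii) gives the frequency p(c) of c in D[alpha].
   Hence u c has density mu_p(u) * p(c); if u occurs only finitely often
   both densities vanish. *)

From HB Require Import structures.
From mathcomp Require Import all_boot all_order all_algebra.
From mathcomp Require Import all_classical all_reals all_analysis.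
From mathcomp Require Import zify.
Set Implicit Arguments. Unset Strict Implicit. Unset Printing Implicit Defensive.
Import Order.TTheory GRing.Theory Num.Theory numFieldNormedType.Exports.
Local Open Scope classical_set_scope.
Local Open Scope ring_scope.

Section Density.
Variable R : realType.
Implicit Types (a b : nat -> nat) (x y : R).

Local Notation density a := (fun N : nat => ((a N)%:R / N%:R : R)).

Lemma density_const0 (d : nat) : density (fun=> d) @ \oo --> 0.
Proof.
apply/cvgrPdist_le => e e0; near=> N.
have N0 : (0 : R) < N%:R by rewrite ltr0n; near: N; exact: nbhs_infty_gt.
rewrite sub0r normrN ger0_norm ?divr_ge0 // ler_pdivrMr // -ler_pdivrMl // mulrC.
by near: N; exact: nbhs_infty_ger.
Unshelve. all: end_near. Qed.

Lemma density_bdiff a b (d : nat) x :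
  (forall N, (a N <= b N + d)%N) -> (forall N, (b N <= a N + d)%N) ->
  density a @ \oo --> x -> density b @ \oo --> x.
Proof.
move=> hab hba ha.
have -> : density b = fun N => (a N)%:R / N%:R + ((b N)%:R - (a N)%:R) / N%:R.
  by apply: funext => N; rewrite -mulrDl addrCA subrr addr0.
rewrite -[x]addr0; apply: cvgD => //.
apply: (@squeeze_cvgr _ _ _ _ (fun N => - (d%:R / N%:R)) (density (fun=> d))).
- near=> N; rewrite -mulNr !ler_wpM2r ?invr_ge0 //.
    by rewrite lerBlDr -natrD ler_nat addnC hba.
  by rewrite lerNl opprB lerBlDr -natrD ler_nat addnC hab.
- by rewrite -oppr0; apply: cvgN; exact: density_const0.
- exact: density_const0.
Unshelve. all: end_near. Qed.

Lemma density_bounded a (d : nat) : (forall N, (a N <= d)%N) -> density a @ \oo --> 0.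
Proof.
by move=> ad; apply: (@density_bdiff (fun=> 0%N) a d 0 _ _ (density_const0 0)) => N /=.
Qed.

Lemma nondecreasing_bounded a : {homo a : m n / (m <= n)%N} -> ~ (a @ \oo --> \oo) ->
  exists d, forall N, (a N <= d)%N.
Proof.
move=> mono; apply: contra_notP => unb; apply/cvgnyPge => d.
have [N hN] : exists N, (d <= a N)%N.
  apply: contra_notP unb => small; exists d => N.
  by rewrite leqNgt; apply/negP => lt_d; apply: small; exists N; exact: ltnW.
by near=> M; apply: leq_trans hN (mono _ _ _); near: M; exact: nbhs_infty_ge.
Unshelve. all: end_near. Qed.

Lemma density_mul a b x y :
  {homo a : m n / (m <= n)%N} -> (forall N, (b N <= a N)%N) ->
  density a @ \oo --> x ->
  (a @ \oo --> \oo -> (fun N => (b N)%:R / (a N)%:R : R) @ \oo --> y) ->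
  density b @ \oo --> x * y.
Proof.
move=> mono ba ha hba.
have [ainf | /(nondecreasing_bounded mono) [d ad]] := pselect (a @ \oo --> \oo).
  have -> : density b = fun N => (b N)%:R / (a N)%:R * ((a N)%:R / N%:R).
    apply: funext => N; have [a0 | an0] := eqVneq (a N) 0%N.
      by move: (ba N); rewrite a0 leqn0 => /eqP ->; rewrite !mul0r.
    by rewrite mulrA divfK // pnatr_eq0.
  by rewrite mulrC; apply: cvgM => //; exact: hba.
have -> : x = 0 by exact: (cvg_unique _ ha (density_bounded ad)).
rewrite mul0r; apply: (@density_bounded _ d) => N.
exact: leq_trans (ba N) (ad N).
Qed.

End Density.

Lemma unit_step_ivt (f : nat -> nat) (N k : nat) :
  (forall i, f i.+1 <= (f i).+1)%N -> (f 0 <= N <= f k)%N -> exists i, f i = N.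
Proof.
move=> step; elim: k => [|k IH] /andP[f0N Nfk].
  by exists 0%N; apply/eqP; rewrite eqn_leq f0N Nfk.
have [Nfk' | fkN] := leqP N (f k); first by apply: IH; rewrite f0N Nfk'.
by exists k.+1; apply/eqP; rewrite eqn_leq Nfk (leq_trans (step k) fkN).
Qed.

Section Selection.
Variable Sigma : Type.
Implicit Types (A : dfa Sigma) (alpha beta : nat -> Sigma).

Lemma wprefixS beta k : wprefix beta k.+1 = rcons (wprefix beta k) (beta k).
Proof. by rewrite /wprefix -addn1 iotaD map_cat cats1. Qed.

Lemma size_wprefix beta k : size (wprefix beta k) = k.
Proof. by rewrite size_map size_iota. Qed.

Lemma nth_wprefix beta k i x0 : (i < k)%N -> nth x0 (wprefix beta k) i = beta i.
Proof. by move=> ik; rewrite (nth_map 0%N) ?size_iota // nth_iota. Qed.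

Lemma sel_prefixS A alpha k : sel_prefix A alpha k.+1 =
  sel_prefix A alpha k ++ (if selected A alpha k then [:: alpha k] else [::]).
Proof.
rewrite /sel_prefix -addn1 iotaD filter_cat map_cat /= add0n.
by case: (selected A alpha k).
Qed.

Lemma sel_prefix_mono A alpha k m : exists s,
  sel_prefix A alpha (k + m) = sel_prefix A alpha k ++ s.
Proof.
elim: m => [|m [s IH]]; first by exists [::]; rewrite addn0 cats0.
exists (s ++ (if selected A alpha (k + m) then [:: alpha (k + m)] else [::])).
by rewrite addnS sel_prefixS IH catA.
Qed.

Lemma nth_sel_prefix A alpha k1 k2 i x0 :
  (i < size (sel_prefix A alpha k1))%N -> (i < size (sel_prefix A alpha k2))%N ->
  nth x0 (sel_prefix A alpha k1) i = nth x0 (sel_prefix A alpha k2) i.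
Proof.
wlog le12 : k1 k2 / (k1 <= k2)%N.
  move=> H h1 h2; have [le|/ltnW le] := leqP k1 k2; first exact: H.
  by symmetry; apply: H.
move=> h1 _; have [s] := sel_prefix_mono A alpha k1 (k2 - k1).
by rewrite subnKC // => ->; rewrite nth_cat h1.
Qed.

Lemma wprefix_select A alpha N k :
  (N <= size (sel_prefix A alpha k))%N ->
  wprefix (dfa_select A alpha) N = take N (sel_prefix A alpha k).
Proof.
move=> Nk; apply: (@eq_from_nth _ (alpha 0%N)).
  by rewrite size_wprefix size_take_min; apply/esym/minn_idPl.
move=> i; rewrite size_wprefix => iN.
have ik : (i < size (sel_prefix A alpha k))%N by exact: leq_trans iN Nk.
rewrite nth_wprefix // nth_take // /dfa_select.
case: pselect => [h|[]]; last by exists k.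
by apply: nth_sel_prefix => //; case: (ex_minnP h).
Qed.

Definition nsel A alpha k := size (sel_prefix A alpha k).

Lemma sel_prefixE A alpha k :
  sel_prefix A alpha k = wprefix (dfa_select A alpha) (nsel A alpha k).
Proof. by rewrite (@wprefix_select A alpha _ k (leqnn _)) take_size. Qed.

Lemma nselS A alpha k : nsel A alpha k.+1 = (nsel A alpha k + selected A alpha k)%N.
Proof. by rewrite /nsel sel_prefixS size_cat; case: selected. Qed.

Lemma select_nsel A alpha k : selected A alpha k ->
  alpha k = dfa_select A alpha (nsel A alpha k).
Proof.
move=> sk; have := sel_prefixE A alpha k.+1.
rewrite sel_prefixS sk nselS sk addn1 wprefixS sel_prefixE cats1.
by move/rcons_inj => [].
Qed.

Lemma nsel_onto A alpha : sel_infinite A alpha -> forall N, exists k, nsel A alpha k = N.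
Proof.
move=> inf N; have [k Nk] := inf N.
apply: (@unit_step_ivt _ _ k) => [i|]; first by rewrite nselS -addn1 leq_add2l leq_b1.
by rewrite /nsel /sel_prefix /= ltnW.
Qed.

End Selection.

Section PrefixMemory.
Variables (Sigma : eqType) (u : seq Sigma).

(* A memory is a set of lengths j <= |u|; it is meant to hold exactly the j
   such that the word read so far ends with the prefix of length j of u. *)
Local Notation memory := {set 'I_(size u).+1}.

Definition memory_step (M : memory) (x : Sigma) : memory :=
  [set j : 'I_(size u).+1 |
     (val j == 0%N) || ((inord j.-1 \in M) && (nth x u j.-1 == x))]%SET.

Lemma memory_run0 (M : memory) s : ord0 \in M -> ord0 \in foldl memory_step M s.
Proof. by elim/last_ind: s => [//|s x IH] M0; rewrite foldl_rcons inE. Qed.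

Lemma memory_runE (M : memory) s (j : 'I_(size u).+1) : ord0 \in M -> (j <= size s)%N ->
  (j \in foldl memory_step M s) = (drop (size s - j) s == take j u).
Proof.
move=> M0; elim/last_ind: s j => [|s x IH] j.
  rewrite leqn0 => /eqP j0; have -> : j = ord0 by apply: val_inj.
  by rewrite M0 /= take0.
rewrite size_rcons foldl_rcons inE; case: j => [[|j] lt_j] /=.
  by move=> _; rewrite subn0 drop_oversize ?size_rcons // take0.
rewrite ltnS => js; have lt_j' : (j < (size u).+1)%N by exact: ltnW.
have -> : (inord j : 'I_(size u).+1) = Ordinal lt_j' by apply: val_inj; rewrite /= inordK.
rewrite (IH (Ordinal lt_j')) // subSS drop_rcons ?leq_subr // (take_nth x) //.
by rewrite eqseq_rcons [x == _]eq_sym.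
Qed.

Lemma memory_run_settled (M1 M2 : memory) s : ord0 \in M1 -> ord0 \in M2 ->
  (size u <= size s)%N -> foldl memory_step M1 s = foldl memory_step M2 s.
Proof.
move=> M10 M20 us; apply/setP => j.
have js : (j <= size s)%N by apply: leq_trans us; rewrite -ltnS.
by rewrite !memory_runE.
Qed.

End PrefixMemory.

Section MatchAutomaton.
Variables (Sigma : eqType) (A : dfa Sigma) (u : seq Sigma).
Local Notation memory := {set 'I_(size u).+1}.

Lemma delta_star_cat (q : state A) w1 w2 :
  delta_star q (w1 ++ w2) = delta_star (delta_star q w1) w2.
Proof. by rewrite /delta_star foldl_cat. Qed.

Fixpoint sel_word (q : state A) (w : seq Sigma) : seq Sigma :=
  if w is x :: w' then (if q \in accept A then [:: x] else [::]) ++ sel_word (delta q x) w'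
  else [::].

Lemma sel_word_cat q w1 w2 :
  sel_word q (w1 ++ w2) = sel_word q w1 ++ sel_word (delta_star q w1) w2.
Proof. by elim: w1 q => [|x w IH] q //=; rewrite IH catA. Qed.

Lemma sel_word_start alpha k : sel_word (start A) (wprefix alpha k) = sel_prefix A alpha k.
Proof.
elim: k => [//|k IH]; rewrite wprefixS -cats1 sel_word_cat IH sel_prefixS /=.
by rewrite /selected cats0.
Qed.

Definition match_step (qM : state A * memory) (x : Sigma) : state A * memory :=
  (delta qM.1 x, if qM.1 \in accept A then memory_step qM.2 x else qM.2).

Lemma match_runE q (M : memory) w :
  foldl match_step (q, M) w = (delta_star q w, foldl (memory_step (u:=u)) M (sel_word q w)).
Proof.
elim: w q M => [|x w IH] q M //=; rewrite /match_step /= IH.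
by case: (q \in accept A).
Qed.

(* Settled configurations: reached after A has selected at least |u|
   letters, so that the memory is exact.  They are closed under steps. *)
Definition settled (qM : state A * memory) : Prop :=
  exists q0 w, qM = (delta_star q0 w, foldl (memory_step (u:=u)) [set ord0]%SET (sel_word q0 w))
               /\ (size u <= size (sel_word q0 w))%N.

Lemma settled_step qM x : settled qM -> settled (match_step qM x).
Proof.
move=> [q0 [w [-> us]]]; exists q0, (rcons w x).
rewrite -cats1 sel_word_cat delta_star_cat foldl_cat size_cat; split.
  by rewrite /match_step /=; case: (_ \in accept A).
exact: leq_trans us (leq_addr _ _).
Qed.

Lemma settled_memory0 qM : settled qM -> ord0 \in qM.2.
Proof. by move=> [q0 [w [-> _]]]; apply: memory_run0; rewrite set11. Qed.

Definition settled_set : {set state A * memory} := [set qM | `[< settled qM >]]%SET.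

Lemma settled_setP qM : reflect (settled qM) (qM \in settled_set).
Proof. by rewrite inE; exact: asboolP. Qed.

Definition match_state := {qM : state A * memory | qM \in settled_set}.

Lemma match_stateP (s : match_state) : settled (val s).
Proof. exact/settled_setP/valP. Qed.

Definition match_delta (s : match_state) (x : Sigma) : match_state :=
  exist _ (match_step (val s) x) (introT (settled_setP _) (settled_step x (match_stateP s))).

Definition match_accept : {set match_state} :=
  [set s : match_state | ((val s).1 \in accept A) && (ord_max \in (val s).2)]%SET.

Definition match_dfa (s0 : match_state) : dfa Sigma :=
  @Dfa Sigma _ match_delta s0 match_accept.

Lemma val_match_run s0 (s : match_state) w :
  val (delta_star (A := match_dfa s0) s w) = foldl match_step (val s) w.
Proof. by elim: w s => [|x w IH] s //=; rewrite /delta_star /= -/(delta_star _ _) IH. Qed.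

(* The product inherits strong connectivity: steer A to the state where the
   target configuration was produced and replay the same word; the memory
   agrees at the end since both runs selected at least |u| letters. *)
Lemma match_dfa_sc s0 : strongly_connected A -> strongly_connected (match_dfa s0).
Proof.
move=> sc [[q M] sM] s'; have M0 := settled_memory0 (elimT (settled_setP _) sM).
have [q0 [w [eq_s' us]]] := match_stateP s'; have [v hv] := sc q q0.
exists (v ++ w); apply: val_inj.
rewrite val_match_run /= match_runE eq_s' sel_word_cat foldl_cat delta_star_cat hv.
by congr pair; apply: memory_run_settled; rewrite ?set11 ?memory_run0.
Qed.

Lemma selected_match alpha s0 M0 : val s0 = (start A, M0) -> forall i,
  selected (match_dfa s0) alpha i =
  selected A alpha i && (ord_max \in foldl (memory_step (u:=u)) M0 (sel_prefix A alpha i)).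
Proof.
by move=> s00 i; rewrite /selected inE val_match_run s00 match_runE sel_word_start.
Qed.

(* If A is strongly connected and selects something, some settled
   configuration has A in its start state: loop from start through an
   accepting state until |u| letters have been selected. *)
Lemma settled_start (x : Sigma) : strongly_connected A -> (exists q, q \in accept A) ->
  exists M, settled (start A, M).
Proof.
move=> sc [qa qa_acc]; have [v1 h1] := sc (start A) qa.
have [v2 h2] := sc (delta qa x) (start A).
pose z := v1 ++ x :: v2.
have z_loop : delta_star (start A) z = start A by rewrite delta_star_cat h1.
have z_sel : (0 < size (sel_word (start A) z))%N.
  by rewrite sel_word_cat h1 /= qa_acc size_cat /= addnS.
have loops m : exists w, delta_star (start A) w = start A /\
    (m <= size (sel_word (start A) w))%N.
  elim: m => [|m [w [hw hm]]]; first by exists [::].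
  exists (w ++ z); rewrite delta_star_cat hw z_loop sel_word_cat hw size_cat; split => //.
  by rewrite -addn1 leq_add.
have [w [hw hm]] := loops (size u).
exists (foldl (memory_step (u:=u)) [set ord0]%SET (sel_word (start A) w)).
by exists (start A), w; rewrite hw.
Qed.

End MatchAutomaton.

Section Occurrences.
Variables (Sigma : eqType) (beta : nat -> Sigma).
Local Open Scope nat_scope.

Definition occurs_at (w : seq Sigma) (i : nat) : bool :=
  [seq beta k | k <- iota i (size w)] == w.

Lemma count_occ_wprefix (w : seq Sigma) N : 0 < size w ->
  count_occ w (wprefix beta N) = count (occurs_at w) (iota 0 (N.+1 - size w)).
Proof.
move=> w0; rewrite /count_occ size_wprefix.
have le_N : N.+1 - size w <= N by lia.
rewrite -[X in count _ (iota 0 X) = _](subnKC le_N) iotaD count_cat.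
rewrite [X in _ + X](@eq_in_count _ _ pred0) ?count_pred0 ?addn0.
  apply: eq_in_count => i; rewrite mem_iota add0n => /= lt_iN.
  rewrite /occurs_at /wprefix -map_drop -map_take drop_iota take_iota add0n.
  by have -> : minn (size w) (N - i) = size w by lia.
move=> i; rewrite mem_iota add0n => /andP[h1 h2] /=; apply/negbTE/eqP => e.
by have := congr1 size e; rewrite size_take_min size_drop size_wprefix; lia.
Qed.

Lemma count_occ1 (c : Sigma) s : count_occ [:: c] s = count (pred1 c) s.
Proof.
rewrite /count_occ -[in RHS](mkseq_nth c s) /mkseq count_map.
apply: eq_in_count => i; rewrite mem_iota add0n /= => lt_is.
by rewrite (drop_nth c) //= take0 eqseq_cons andbT eq_sym.
Qed.

Lemma count_iotaD (P : pred nat) n m :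
  count P (iota 0 (n + m)) = count P (iota 0 n) + count (fun i => P (n + i)) (iota 0 m).
Proof. by rewrite iotaD count_cat add0n -[in iota n m](addn0 n) iotaDl count_map. Qed.

End Occurrences.

Section FollowingLetters.
Variables (Sigma : eqType) (beta : nat -> Sigma) (u : seq Sigma) (c : Sigma).
Variable M0 : {set 'I_(size u).+1}.
Hypothesis M00 : ord0 \in M0.
Hypothesis u_gt0 : (0 < size u)%N.

(* Position j of beta follows an occurrence of u, as seen by the memory of u
   started in M0 (exact once j >= |u|). *)
Definition follows_u (j : nat) : bool :=
  ord_max \in foldl (memory_step (u:=u)) M0 (wprefix beta j).

Definition nfollow (N : nat) : nat := count follows_u (iota 0 N).
Definition nfollow_c (N : nat) : nat := count (fun j => follows_u j && (beta j == c)) (iota 0 N).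

Lemma follows_uE i : follows_u (size u + i)%N = occurs_at beta u i.
Proof.
rewrite /follows_u memory_runE ?size_wprefix ?leq_addr //= take_size addKn.
by rewrite /occurs_at /wprefix -map_drop drop_iota add0n addnK.
Qed.

Local Open Scope nat_scope.

Lemma nfollow_bdiff N :
  nfollow N <= count_occ u (wprefix beta N) + size u /\
  count_occ u (wprefix beta N) <= nfollow N + size u.
Proof.
rewrite count_occ_wprefix // /nfollow; have [le_Nu | lt_uN] := leqP N (size u).
  have := count_size follows_u (iota 0 N).
  have := count_size (occurs_at beta u) (iota 0 (N.+1 - size u)).
  rewrite !size_iota; lia.
rewrite -(subnKC (ltnW lt_uN)) count_iotaD (eq_count follows_uE).
have -> : (size u + (N - size u)).+1 - size u = (N - size u) + 1 by lia.
rewrite count_iotaD.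
have := count_size follows_u (iota 0 (size u)).
have := count_size (fun i => occurs_at beta u (N - size u + i)) (iota 0 1).
rewrite !size_iota; lia.
Qed.

Lemma nfollow_c_bdiff N :
  nfollow_c N <= count_occ (rcons u c) (wprefix beta N) + size u /\
  count_occ (rcons u c) (wprefix beta N) <= nfollow_c N + size u.
Proof.
have occ_uc i : occurs_at beta (rcons u c) i = occurs_at beta u i && (beta (size u + i) == c).
  by rewrite /occurs_at size_rcons -addn1 iotaD map_cat cats1 eqseq_rcons /= addnC.
rewrite count_occ_wprefix ?size_rcons // subSS (eq_count occ_uc) /nfollow_c.
have [le_Nu | lt_uN] := leqP N (size u).
  have := count_size (fun j => follows_u j && (beta j == c)) (iota 0 N).
  rewrite size_iota; have -> : N - size u = 0 by lia.
  rewrite /=; lia.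
rewrite -(subnKC (ltnW lt_uN)) count_iotaD addKn.
under [X in _ + X]eq_count do rewrite follows_uE.
have := count_size (fun j => follows_u j && (beta j == c)) (iota 0 (size u)).
rewrite !size_iota; lia.
Qed.

Lemma nfollow_c_le N : nfollow_c N <= nfollow N.
Proof. by apply: sub_count => j /andP[]. Qed.

Lemma nfollow_mono : {homo nfollow : m n / m <= n}.
Proof. by move=> m n mn; rewrite /nfollow -(subnKC mn) count_iotaD leq_addr. Qed.

Local Close Scope nat_scope.

Lemma density_rcons (R : realType) (mu_u pc : R) :
  (fun N => (count_occ u (wprefix beta N))%:R / N%:R) @ \oo --> mu_u ->
  (nfollow @ \oo --> \oo -> (fun N => (nfollow_c N)%:R / (nfollow N)%:R) @ \oo --> pc) ->
  (fun N => (count_occ (rcons u c) (wprefix beta N))%:R / N%:R) @ \oo --> mu_u * pc.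
Proof.
move=> dens_u freq_c.
have dens_follow : (fun N => (nfollow N)%:R / N%:R : R) @ \oo --> mu_u.
  by apply: (density_bdiff (d := size u) _ _ dens_u) => N; case: (nfollow_bdiff N).
have := density_mul nfollow_mono nfollow_c_le dens_follow freq_c.
by apply: (density_bdiff (d := size u)) => N; case: (nfollow_c_bdiff N).
Qed.

End FollowingLetters.

Section MatchSelection.
Variables (Sigma : eqType) (A : dfa Sigma) (alpha : nat -> Sigma) (u : seq Sigma).
Variables (M0 : {set 'I_(size u).+1}) (s0 : match_state A u).
Hypothesis s00 : val s0 = (start A, M0).
Local Notation beta := (dfa_select A alpha).
Local Notation D := (match_dfa s0).

Lemma sel_prefix_match k : sel_prefix D alpha k =
  [seq beta j | j <- iota 0 (nsel A alpha k) & follows_u beta M0 j].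
Proof.
elim: k => [//|k IH]; rewrite sel_prefixS IH (selected_match alpha s00) nselS.
case sk: (selected A alpha k) => /=; last by rewrite addn0 cats0.
rewrite addn1 -[(nsel A alpha k).+1]addn1 iotaD filter_cat map_cat /= add0n.
by rewrite /follows_u -sel_prefixE; case: ifP => //= _; rewrite -(select_nsel sk).
Qed.

Lemma nsel_match k : nsel D alpha k = nfollow beta M0 (nsel A alpha k).
Proof. by rewrite /nsel sel_prefix_match size_map size_filter. Qed.

Lemma count_sel_match c k :
  count_occ [:: c] (sel_prefix D alpha k) = nfollow_c beta c M0 (nsel A alpha k).
Proof.
rewrite sel_prefix_match count_occ1 count_map count_filter.
by apply: eq_count => j; rewrite andbC.
Qed.

End MatchSelection.

Lemma mu_rcons (R : realType) (Sigma : Type) (p : Sigma -> R) u c :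
  mu p (rcons u c) = mu p u * p c.
Proof. by rewrite /mu -cats1 big_cat /= big_seq1. Qed.

Section ExtensionStep.
Variables (R : realType) (Sigma : eqType) (p : Sigma -> R).
Variables (A : dfa Sigma) (alpha : nat -> Sigma).
Hypotheses (A_sc : strongly_connected A) (A_inf : sel_infinite A alpha).

Hypothesis letter_freq : forall B : dfa Sigma, strongly_connected B -> sel_infinite B alpha ->
  forall a : Sigma, (fun N => (count_occ [:: a] (wprefix (dfa_select B alpha) N))%:R / N%:R : R)
    @ \oo --> p a.

Local Notation beta := (dfa_select A alpha).
Local Notation density w := (fun N => (count_occ w (wprefix beta N))%:R / N%:R : R).

Lemma accept_nonempty : exists q, q \in accept A.
Proof.
have [k] := A_inf 0%N; rewrite /sel_prefix size_map size_filter -has_count.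
by case/hasP => i _ sel_i; exists (delta_star (start A) (wprefix alpha i)).
Qed.

Lemma density_extend u c : u != [::] ->
  density u @ \oo --> mu p u -> density (rcons u c) @ \oo --> mu p (rcons u c).
Proof.
move=> u_nil dens_u; have u_gt0 : (0 < size u)%N by rewrite lt0n size_eq0.
have [M0 settled_M0] := settled_start u (alpha 0%N) A_sc accept_nonempty.
pose s0 : match_state A u := exist _ (start A, M0) (introT (settled_setP _) settled_M0).
have s00 : val s0 = (start A, M0) by [].
have M00 : ord0 \in M0 := settled_memory0 settled_M0.
rewrite mu_rcons; apply: (density_rcons M00 u_gt0 dens_u) => follow_inf.
have D_inf : sel_infinite (match_dfa s0) alpha.
  move=> m; have [N m_lt] : exists N, (m < nfollow beta M0 N)%N.
    by move/cvgnyPge: follow_inf => /(_ m.+1) ev; near \oo => N; exists N; near: N.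
  have [k kN] := nsel_onto A_inf N.
  by exists k; rewrite -/(nsel _ _ _) (nsel_match alpha s00) kN.
have freq_c := @letter_freq _ (match_dfa_sc A_sc) D_inf c.
suff -> : (fun N => (nfollow_c beta c M0 N)%:R / (nfollow beta M0 N)%:R : R) =
  (fun K => (count_occ [:: c] (wprefix (dfa_select (match_dfa s0) alpha) K))%:R / K%:R)
    \o nfollow beta M0 by exact: cvg_comp follow_inf freq_c.
apply: funext => N /=; have [k <-] := nsel_onto A_inf N.
by rewrite -(nsel_match alpha s00) -sel_prefixE (count_sel_match alpha s00).
Unshelve. all: end_near. Qed.

End ExtensionStep.

Theorem lemma5p3 (R : realType) (Sigma : countType) (p : Sigma -> R)
  (alpha : nat -> Sigma) :
  bernoulli_dist p ->
  mu_distributed p alpha ->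
  ((forall A : dfa Sigma, strongly_connected A -> sel_infinite A alpha ->
      mu_distributed p (dfa_select A alpha))
   <->
   (forall A : dfa Sigma, strongly_connected A -> sel_infinite A alpha ->
      forall a : Sigma,
        (fun N : nat =>
           (count_occ [:: a] (wprefix (dfa_select A alpha) N))%:R / N%:R : R)
          @ \oo --> (p a : R))).
Proof.
move=> _ _; split=> [distr A A_sc A_inf a | freq A A_sc A_inf w].
  by have := distr A A_sc A_inf [:: a] isT; rewrite /mu big_seq1.
elim/last_ind: w => [//|u c IH] _.
have [->|u_nil] := eqVneq u [::].
  by have := freq A A_sc A_inf c; rewrite /mu /= big_seq1.
exact: density_extend (IH u_nil).
Qed.
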